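(* For every $n\ge0$, $\phi_n(x)=(x-1)\cdot U^{\mathrm{e}}_n(x)\cdot S_n(x)$.
   Context: $U_n(x)$ is the Chebyshev polynomial of the second kind ($U_n(\cos\theta)=\sin((n+1)\theta)/\sin\theta$), with $U_{-1}=0$. The partial Chebyshev polynomial $U^{\mathrm{e}}_n$ is the polynomial with $U^{\mathrm{e}}_n(\cos\theta)=\frac{\sin((n+1)\theta/2)}{\sin(\theta/2)}$ for even $n$ and $U^{\mathrm{e}}_n(\cos\theta)=\frac{\sin((n+1)\theta/2)}{\sin\theta}$ for odd $n$. Define $\phi_n(x)=((n+1)x^2-3x-n)U_n(x)+(x+1)(U_{n-1}(x)+1)$ and, for $n\ge0$, $S_{2n}(x)=(2nx+x+2n-1)U_n(x)-(2nx+3x+2n+1)U_{n-1}(x)$, $S_{2n+1}(x)=2(2nx^2+2x^2+2nx-x-1)U_n(x)-2(2nx+3x+2n+1)U_{n-1}(x)$. *)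

From HB Require Import structures.
From mathcomp Require Import all_boot all_order all_algebra.
From mathcomp Require Import all_classical all_reals all_analysis.
Set Implicit Arguments. Unset Strict Implicit. Unset Printing Implicit Defensive.
Import Order.TTheory GRing.Theory Num.Theory.
Local Open Scope ring_scope.

Section Cheb.
Variable R : comNzRingType.

(* chebUpair n = (U_{n-1}, U_n), with U_{-1} = 0, U_0 = 1,
   U_{n+1} = 2 x U_n - U_{n-1}. *)
Fixpoint chebUpair (n : nat) : {poly R} * {poly R} :=
  match n with
  | 0%N => (0, 1)
  | m.+1 => let: (a, b) := chebUpair m in (b, 2%:P * 'X * b - a)
  end.

Definition chebU (n : nat) : {poly R} := (chebUpair n).2.
Definition chebUm1 (n : nat) : {poly R} := (chebUpair n).1.

Definition phi (n : nat) : {poly R} :=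
  ((n.+1)%:R%:P * 'X ^+ 2 - 3%:P * 'X - n%:R%:P) * chebU n
  + ('X + 1) * (chebUm1 n + 1).

Definition Spoly (k : nat) : {poly R} :=
  let m := k./2 in
  let M := (2 * m)%:R%:P : {poly R} in
  if odd k then
    2%:P * (M * 'X ^+ 2 + 2%:P * 'X ^+ 2 + M * 'X - 'X - 1) * chebU m
    - 2%:P * (M * 'X + 3%:P * 'X + M + 1) * chebUm1 m
  else
    (M * 'X + 'X + M - 1) * chebU m
    - (M * 'X + 3%:P * 'X + M + 1) * chebUm1 m.

End Cheb.

From HB Require Import structures.
From mathcomp Require Import all_boot all_order all_algebra.
From mathcomp Require Import all_classical all_reals all_analysis.
From mathcomp Require Import ring lra.
Import Order.TTheory GRing.Theory Num.Theory.
Local Open Scope ring_scope.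

(* Splitting by the parity of n, the doubling formulas for U express U_{2m},
   U_{2m-1}, U_{2m+1} through a = U_m and b = U_{m-1}; the Cassini identity
   a^2 - 2xab + b^2 = 1 turns the constant 1 in phi into a quadratic form in
   a, b, after which both cases are polynomial identities in x, a, b.  On the
   other side, U^e_{2m} = U_m + U_{m-1} and U^e_{2m+1} = U_m: both sides agree
   at cos t for every t in (0, pi), hence as polynomials. *)

Section ChebyshevAlgebra.
Variable R : comNzRingType.

Lemma chebU_S m : chebU R m.+1 = 2%:P * 'X * chebU R m - chebUm1 R m.
Proof. by rewrite /chebU /chebUm1 /=; case: chebUpair. Qed.

Lemma chebUm1_S m : chebUm1 R m.+1 = chebU R m.
Proof. by rewrite /chebU /chebUm1 /=; case: chebUpair. Qed.

Lemma chebU0 : chebU R 0 = 1. Proof. by []. Qed.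

Lemma chebUm10 : chebUm1 R 0 = 0. Proof. by []. Qed.

Lemma chebU_cassini m :
  chebU R m ^+ 2 - 2%:P * 'X * chebU R m * chebUm1 R m + chebUm1 R m ^+ 2 = 1.
Proof.
elim: m => [|m IH]; first by rewrite chebU0 chebUm10; ring.
by rewrite chebU_S chebUm1_S -IH; ring.
Qed.

Lemma chebU_double m :
  chebU R m.*2 = chebU R m ^+ 2 - chebUm1 R m ^+ 2 /\
  chebUm1 R m.*2 = 2%:P * chebUm1 R m * (chebU R m - 'X * chebUm1 R m).
Proof.
elim: m => [|m [IHU IHUm1]]; first by rewrite /= chebU0 chebUm10; split; ring.
by rewrite doubleS !chebU_S !chebUm1_S chebU_S IHU IHUm1; split; ring.
Qed.

Lemma chebU_doubleS m :
  chebU R m.*2.+1 = 2%:P * chebU R m * ('X * chebU R m - chebUm1 R m) /\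
  chebUm1 R m.*2.+1 = chebU R m ^+ 2 - chebUm1 R m ^+ 2.
Proof.
have [UE Um1E] := chebU_double m.
by rewrite chebU_S chebUm1_S UE Um1E; split; ring.
Qed.

Lemma phi_double m :
  phi R m.*2 = ('X - 1) * (chebU R m + chebUm1 R m) * Spoly R m.*2.
Proof.
have [UE Um1E] := chebU_double m.
rewrite /phi /Spoly odd_double doubleK.
rewrite -[X in chebUm1 R _ + X](chebU_cassini m) UE Um1E.
rewrite !polyC_natr -!muln2.
move: (chebU R m) (chebUm1 R m) => a b.
ring.
Qed.

Lemma phi_doubleS m :
  phi R m.*2.+1 = ('X - 1) * chebU R m * Spoly R m.*2.+1.
Proof.
have [UE Um1E] := chebU_doubleS m.
rewrite /phi /Spoly /= odd_double uphalf_double /=.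
rewrite -[X in chebUm1 R _ + X](chebU_cassini m) UE Um1E.
rewrite !polyC_natr -!muln2.
move: (chebU R m) (chebUm1 R m) => a b.
ring.
Qed.

End ChebyshevAlgebra.

Lemma eq_poly_01 (R : numFieldType) (p q : {poly R}) :
  (forall x, 0 < x < 1 -> p.[x] = q.[x]) -> p = q.
Proof.
move=> Epq; apply/eqP; rewrite -subr_eq0; apply/eqP.
apply: (@roots_geq_poly_eq0 _ _ [seq k.+2%:R^-1 | k <- iota 0 (size (p - q))]).
- apply/allP => _ /mapP [k _ ->].
  rewrite /root hornerD hornerN Epq ?subrr //.
  by rewrite invr_gt0 ltr0n /= invf_lt1 ?ltr0n // ltr1n.
- rewrite map_inj_uniq ?iota_uniq // => i j /invr_inj /eqP.
  by rewrite eqr_nat => /eqP [].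
- by rewrite size_map size_iota.
Qed.

Section ChebyshevTrigonometry.
Variable R : realType.

Lemma eq_poly_cos (p q : {poly R}) :
  (forall t, 0 < t < pi -> p.[cos t] = q.[cos t]) -> p = q.
Proof.
move=> Epq; apply: eq_poly_01 => x /andP[x_gt0 x_lt1].
have x_itv : x \in `[-1, 1] by rewrite in_itv /=; apply/andP; split; lra.
rewrite -(acosK x_itv); apply: Epq; apply/andP; split.
- by apply: acos_gt0; apply/andP; split; lra.
- by apply: acos_ltpi; apply/andP; split; lra.
Qed.

Lemma sin_double_half (t : R) : sin t = 2 * sin (t / 2) * cos (t / 2).
Proof. by rewrite {1}(splitr t) sinD; ring. Qed.

Lemma chebU_cos m t :
  (chebU R m).[cos t] * sin t = sin (m.+1%:R * t) /\
  (chebUm1 R m).[cos t] * sin t = sin (m%:R * t).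
Proof.
elim: m => [|m [IHU IHUm1]].
  by rewrite chebU0 chebUm10 !hornerC mul1r !mul0r mul1r sin0.
rewrite chebU_S chebUm1_S IHU; split=> //.
rewrite hornerD hornerN !hornerM hornerX hornerC mulrBl IHUm1 -!mulrA IHU.
have -> : m%:R * t = m.+1%:R * t - t by rewrite -natr1; ring.
have -> : m.+2%:R * t = m.+1%:R * t + t by rewrite -[m.+2]addn1 natrD; ring.
by rewrite sinB sinD; ring.
Qed.

Lemma chebUDm1_cos m t : cos (t / 2) != 0 ->
  (chebU R m + chebUm1 R m).[cos t] * sin (t / 2) = sin (m.*2.+1%:R * t / 2).
Proof.
move=> cos_neq0; have two_neq0 : (2 : R) != 0 by rewrite pnatr_eq0.
apply: (mulIf cos_neq0); apply: (mulfI two_neq0).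
have [UE Um1E] := chebU_cos m t.
have -> : 2 * ((chebU R m + chebUm1 R m).[cos t] * sin (t / 2) * cos (t / 2))
    = sin (m.+1%:R * t) + sin (m%:R * t).
  by rewrite -UE -Um1E (sin_double_half t) hornerD; ring.
have -> : m.+1%:R * t = m.*2.+1%:R * t / 2 + t / 2 by rewrite -muln2; field.
have -> : m%:R * t = m.*2.+1%:R * t / 2 - t / 2 by rewrite -muln2; field.
by rewrite sinD sinB; ring.
Qed.

Section PartialChebyshev.
Variable Ue : nat -> {poly R}.

Lemma Ue_double
  (Ue_even : forall (n : nat) (t : R), ~~ odd n -> sin (t / 2) != 0 ->
      (Ue n).[cos t] = sin ((n.+1)%:R * t / 2) / sin (t / 2)) m :
  Ue m.*2 = chebU R m + chebUm1 R m.
Proof.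
apply: eq_poly_cos => t /andP[t_gt0 t_ltpi].
have sin_half_gt0 : 0 < sin (t / 2) by apply: sin_gt0_pi; apply/andP; split; lra.
have cos_half_gt0 : 0 < cos (t / 2) by apply: cos_gt0_pihalf; apply/andP; split; lra.
rewrite Ue_even ?odd_double ?gt_eqF // -(chebUDm1_cos m t (lt0r_neq0 cos_half_gt0)).
by rewrite mulfK ?gt_eqF.
Qed.

Lemma Ue_doubleS
  (Ue_odd : forall (n : nat) (t : R), odd n -> sin t != 0 ->
      (Ue n).[cos t] = sin ((n.+1)%:R * t / 2) / sin t) m :
  Ue m.*2.+1 = chebU R m.
Proof.
apply: eq_poly_cos => t t_itv.
have sin_neq0 : sin t != 0 by rewrite gt_eqF // sin_gt0_pi.
rewrite Ue_odd /= ?odd_double //.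
have -> : m.*2.+2%:R * t / 2 = m.+1%:R * t by rewrite -muln2; field.
by rewrite -(proj1 (chebU_cos m t)) mulfK.
Qed.

End PartialChebyshev.
End ChebyshevTrigonometry.

Theorem mainTheorem11 (R : realType) (Ue : nat -> {poly R})
  (HUe_even : forall (n : nat) (t : R), ~~ odd n -> sin (t / 2) != 0 ->
      (Ue n).[cos t] = sin ((n.+1)%:R * t / 2) / sin (t / 2))
  (HUe_odd : forall (n : nat) (t : R), odd n -> sin t != 0 ->
      (Ue n).[cos t] = sin ((n.+1)%:R * t / 2) / sin t)
  (n : nat) :
  phi R n = ('X - 1) * Ue n * Spoly R n.
Proof.
rewrite -(odd_double_half n); case: (odd n); move: (n./2) => m.
- by rewrite add1n (@Ue_doubleS _ _ HUe_odd) phi_doubleS.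
- by rewrite add0n (@Ue_double _ _ HUe_even) phi_double.
Qed.
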